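(* For all $n\ge0$, \[ c_n^2=\delta_{n,0}+c_{n-1}^2+c_{n-3}^2+2\sum_{l=3}^n p_{l-1}c_{n-l}^2 . \]
   Context: The Narayana's cows numbers $c_n$ are defined by $c_n=\delta_{n,0}+c_{n-1}+c_{n-3}$ for $n\ge0$, $c_n=0$ for $n<0$. The Padovan numbers $p_n$ are defined by $p_n=\delta_{n,0}+p_{n-2}+p_{n-3}$ for $n\ge0$, $p_n=0$ for $n<0$. $\delta_{i,j}$ is $1$ if $i=j$ and $0$ otherwise. Empty sums are $0$. *)

From mathcomp Require Import all_boot all_algebra.
Set Implicit Arguments. Unset Strict Implicit. Unset Printing Implicit Defensive.

(* Narayana's cows numbers on nat: c_0 = 1, c_n = c_{n-1} + c_{n-3} (c_k = 0 for k < 0). *)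
Fixpoint cowN (n : nat) : nat :=
  match n with
  | 0 => 1
  | 1 => 1
  | 2 => 1
  | ((m.+1 as k).+1 as j).+1 => cowN j + cowN m
  end.

(* Padovan numbers on nat: p_0 = 1, p_n = p_{n-2} + p_{n-3} (p_k = 0 for k < 0). *)
Fixpoint padN (n : nat) : nat :=
  match n with
  | 0 => 1
  | 1 => 0
  | 2 => 1
  | ((m.+1 as k).+1 as j).+1 => padN k + padN m
  end.

Definition cow (z : int) : nat := if z is Posz n then cowN n else 0.
Definition pad (z : int) : nat := if z is Posz n then padN n else 0.

From mathcomp Require Import all_boot all_algebra.
From mathcomp Require Import zify.

(* For n = m + 3 the sum in the theorem is T_m = \sum_(k <= m) p_(k+2) c_(m-k)^2,
   and since c_(m+3) = c_(m+2) + c_m the claim amounts to T_m = c_(m+2) c_m.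
   Padovan's recurrence gives T_(m+3) = T_(m+1) + T_m + c_(m+3)^2 + c_(m+2)^2,
   and Narayana's recurrence shows that c_(m+2) c_m satisfies the same
   recurrence; the initial values agree. *)

Lemma cowN_rec m : cowN m.+3 = cowN m.+2 + cowN m. Proof. by []. Qed.
Lemma padN_rec m : padN m.+3 = padN m.+1 + padN m. Proof. by []. Qed.

Lemma cow_nat n : cow n%:Z = cowN n. Proof. by []. Qed.
Lemma pad_nat n : pad n%:Z = padN n. Proof. by []. Qed.

Section PadovanConvolution.

Variable b : nat -> nat.

Definition padconv (m : nat) : nat := \sum_(k < m.+1) padN k * b (m - k).
Definition padconv2 (m : nat) : nat := \sum_(k < m.+1) padN k.+2 * b (m - k).

Lemma padconvSS m : padconv m.+2 = b m.+2 + padconv2 m.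
Proof. by rewrite /padconv 2!big_ord_recl /= mul1n mul0n subn0. Qed.

Lemma padconv2S m : padconv2 m.+1 = padconv m.+1 + padconv m.
Proof.
rewrite /padconv2 /padconv big_ord_recl [in RHS]big_ord_recl -addnA.
congr (_ + _); rewrite -big_split; apply: eq_bigr => i _.
by rewrite !lift0 subSS padN_rec mulnDl.
Qed.

Lemma padconv2_rec m :
  padconv2 m.+3 = b m.+3 + b m.+2 + padconv2 m.+1 + padconv2 m.
Proof. by rewrite padconv2S !padconvSS; lia. Qed.

End PadovanConvolution.

Lemma cowN_mul_rec m :
  cowN m.+3.+2 * cowN m.+3
  = cowN m.+3 ^ 2 + cowN m.+2 ^ 2 + cowN m.+3 * cowN m.+1 + cowN m.+2 * cowN m.
Proof. rewrite !cowN_rec; nia. Qed.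

Lemma padconv2_cowN_sq m :
  padconv2 (fun k => cowN k ^ 2) m = cowN m.+2 * cowN m.
Proof.
elim/ltn_ind: m => -[|[|[|m]]] IH; try by rewrite /padconv2 !big_ord_recl big_ord0.
by rewrite padconv2_rec cowN_mul_rec !IH; lia.
Qed.

Lemma cow_padovan_sum m :
  (\sum_(3 <= l < m.+4) pad (l%:Z - 1) * cow (m.+3%:Z - l%:Z) ^ 2)%N
  = padconv2 (fun k => cowN k ^ 2) m.
Proof.
rewrite -{1}(add0n 3) big_addn !subSS subn0 big_mkord; apply: eq_bigr => i _.
have le_im : (i <= m)%N by rewrite -ltnS.
by rewrite addn3 subzn ?ltnS // -predn_int // cow_nat pad_nat !subSS.
Qed.

Local Open Scope ring_scope.

Theorem mainTheorem12 (n : nat) :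
  ((cow n%:Z) ^ 2 =
   (n == 0)%N + (cow (n%:Z - 1)) ^ 2 + (cow (n%:Z - 3)) ^ 2
   + 2 * \sum_(3 <= l < n.+1) pad (l%:Z - 1) * (cow (n%:Z - l%:Z)) ^ 2)%N.
Proof.
case: n => [|[|[|m]]]; try by rewrite big_geq.
rewrite cow_padovan_sum padconv2_cowN_sq.
rewrite -predn_int // subzn // !cow_nat !subSS subn0 [m.+3.-1]/= cowN_rec; lia.
Qed.
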